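(* Consider an instance of $\mathrm{BAL}(\mu,\nu)$. Let $\ell\in\{1,\dots,\nu-1\}$ and $\mathcal S\subseteq\hat V$ with $|\mathcal S|\le k-(\nu-\ell)$, and let $U=\{\tau\subseteq\hat V:|\tau|=\nu-\ell\}$. Then $\tau^*=\arg\max\{\Phi^{\ge\ell}(\mathcal S\cup\tau):\tau\in U\}$ satisfies \[ \Phi^{\ge\ell}(\mathcal S\cup\tau^* )-\Phi^{\ge\ell}(\mathcal S)\ \ge\ \frac{\Phi^{\ge\ell}(\mathcal S^*_{\ge\ell})-\Phi^{\ge\ell}(\mathcal S)}{\binom{k}{\nu-\ell}}, \] where $\mathcal S^*_{\ge\ell}$ is an optimal solution of size $k$ to maximizing $\Phi^{\ge\ell}$.
   Context: Triggering model: for a directed graph $G=(V,E)$ and $p:E\to[0,1]$, an outcome $X=(T_v)_{v\in V}$ is obtained by having each node $v$ independently choose a subset $T_v$ of its in-neighbours $N_v$, with $T_v=S$ with probability $\prod_{u\in S}p_{uv}\prod_{u\in N_v\setminus S}(1-p_{uv})$; $\rho_X(A)$ is the set of nodes reachable from $A\subseteq V$ via arcs $\{(u,v):u\in T_v\}$. $\mathrm{BAL}(\mu,\nu)$ for integer constants $\mu\ge\nu\ge2$: instance = directed graph $G=(V,E)$, probability functions $p_1,\dots,p_\mu:E\to[0,1]$, seed sets $\mathcal I=(I_1,\dots,I_\mu)$, budget $k\ge2$. Let $\hat V=V\times[\mu]$; a set $\mathcal S\subseteq\hat V$ is identified with $(S_1,\dots,S_\mu)$, $S_i=\{v:(v,i)\in\mathcal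 S\}$. An outcome profile $\mathcal X=(X_1,\dots,X_\mu)$ consists of outcomes $X_i$ w.r.t. $p_i$ (independent in the heterogeneous setting; in the correlated setting all $p_i$ are equal and $X_1=\dots=X_\mu$). Campaign $i$ reaches $v$ from seeds $A_i$ if $v\in\rho_{X_i}(A_i)$. $V^j_{\mathcal X}$ is the set of nodes reached by exactly $j$ campaigns from seeds $\mathcal I$. For $\ell\ge0$, $\Phi^{\ge\ell}(\mathcal S)$ is the expected number (over $\mathcal X$) of nodes $v\notin\bigcup_{j<\ell}V^j_{\mathcal X}$ reached by none or by at least $\nu$ campaigns from seeds $(I_i\cup S_i)_i$. *)

From HB Require Import structures.
From mathcomp Require Import all_boot all_order all_algebra.
Set Implicit Arguments. Unset Strict Implicit. Unset Printing Implicit Defensive.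
Import Order.TTheory GRing.Theory Num.Theory.
Local Open Scope ring_scope.

Section Triggering.
Variables (R : realFieldType) (V : finType).

(* An outcome X = (T_v)_v : each node v chooses a subset T_v of nodes. *)
Definition outcome := {ffun V -> {set V}}.

(* Probability of outcome X in the triggering model for graph E (arc (u,v)
   iff E u v) and edge probabilities p : each v independently picks T_v among
   its in-neighbours N_v, u in T_v with prob. p u v. *)
Definition outcome_prob (E : rel V) (p : V -> V -> R) (X : outcome) : R :=
  \prod_(v : V) \prod_(u : V)
     (if E u v then (if u \in X v then p u v else 1 - p u v)
      else (if u \in X v then 0 else 1)).

Definition reach (X : outcome) (A : {set V}) : {set V} :=
  [set v | [exists a in A, connect (fun u w => u \in X w) a v]].
End Triggering.

Section BAL.
Variables (R : realFieldType) (V : finType) (mu nu : nat).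

Definition profile := {ffun 'I_mu -> outcome V}.

(* Heterogeneous setting (corr = false):
   independent outcomes X_i w.r.t. p_i.  Correlated setting (corr = true):
   all p_i are equal (assumed in the theorem) and X_1 = ... = X_mu is a single
   outcome w.r.t. this common probability function. *)
Definition profile_prob (corr : bool) (E : rel V) (p : 'I_mu -> V -> V -> R)
    (Xs : profile) : R :=
  if corr then
    match [pick i : 'I_mu] with
    | Some i0 => if [forall i, Xs i == Xs i0]
                 then outcome_prob E (p i0) (Xs i0) else 0
    | None => 0
    end
  else \prod_(i : 'I_mu) outcome_prob E (p i) (Xs i).

Definition nreached (Xs : profile) (A : {ffun 'I_mu -> {set V}}) (v : V) : nat :=
  #|[set i : 'I_mu | v \in reach (Xs i) (A i)]|.

Definition slice (S : {set V * 'I_mu}) (i : 'I_mu) : {set V} :=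
  [set v | (v, i) \in S].

Definition augment (I : {ffun 'I_mu -> {set V}}) (S : {set V * 'I_mu}) :
  {ffun 'I_mu -> {set V}} := [ffun i => I i :|: slice S i].

Definition Phi (corr : bool) (E : rel V) (p : 'I_mu -> V -> V -> R)
    (I : {ffun 'I_mu -> {set V}}) (l : nat) (S : {set V * 'I_mu}) : R :=
  \sum_(Xs : profile) profile_prob corr E p Xs *
    (#|[set v : V | [forall j : 'I_l, nreached Xs I v != j] &&
        ((nreached Xs (augment I S) v == 0%N) ||
         (nu <= nreached Xs (augment I S) v)%N)]|)%:R.
End BAL.

From HB Require Import structures.
From mathcomp Require Import all_boot all_order all_algebra.
From mathcomp Require Import zify lra.

(* Fix an outcome profile and a node v.  Whether v is counted by Phi^{>=l} is
   monotone in the seed set, and if v is counted for S :|: T then it is already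
   counted for S :|: t with t \subset T, #|t| = nu - l: at least l campaigns
   reach v from I alone, so at most nu - l further campaigns are needed, and
   each one is secured by a single seed of T that reaches v.  Summing over the
   'C(k, nu - l) such t of a set T of size k gives
     Phi (S :|: T) - Phi S <= \sum_t (Phi (S :|: t) - Phi S)
                          <= 'C(k, nu - l) * (Phi (S :|: tau) - Phi S),
   and Phi T <= Phi (S :|: T) by monotonicity. *)

Set Implicit Arguments. Unset Strict Implicit. Unset Printing Implicit Defensive.
Import Order.TTheory GRing.Theory Num.Theory.
Local Open Scope ring_scope.

Section SubsetsOfGivenSize.
Variable T : finType.

Lemma subset_card_exists (A : {set T}) n :
  (n <= #|A|)%N -> exists2 B : {set T}, B \subset A & #|B| = n.
Proof.
move=> n_le_A; have : (0 < #|[set B : {set T} | B \subset A & #|B| == n]|)%N.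
  by rewrite cards_draws bin_gt0.
by case/card_gt0P => B; rewrite inE => /andP[sBA /eqP cB]; exists B.
Qed.

Lemma subset_card_extend (A B : {set T}) n :
  A \subset B -> (#|A| <= n <= #|B|)%N ->
  exists t : {set T}, [/\ A \subset t, t \subset B & #|t| = n].
Proof.
move=> sAB /andP[An nB].
have [C sC cC] : exists2 C : {set T}, C \subset B :\: A & #|C| = (n - #|A|)%N.
  by apply: subset_card_exists; rewrite cardsDS //; lia.
exists (A :|: C); rewrite subsetUl subUset sAB (subset_trans sC (subsetDl _ _)).
have dAC : [disjoint A & C].
  apply: disjointWr sC _; rewrite disjoints_subset.
  by apply/subsetP => x xA; rewrite !inE xA.
by split=> //; rewrite cardsU (disjoint_setI0 dAC) cards0 subn0 cC; lia.
Qed.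
End SubsetsOfGivenSize.

Section DrawBound.
Variables (R : realFieldType) (X : finType) (m : nat).

Definition draws (T : {set X}) := [set t : {set X} | t \subset T & #|t| == m].

Definition draw_bounded (f : {set X} -> R) :=
  forall S T : {set X}, (m <= #|T|)%N ->
  f (S :|: T) + #|draws T|%:R * f S <= f S + \sum_(t in draws T) f (S :|: t).

Lemma indicator_draw_bounded (P : {set X} -> bool) :
  (forall S T : {set X}, S \subset T -> P S -> P T) ->
  (forall S T : {set X}, (m <= #|T|)%N -> P (S :|: T) ->
     exists2 t, t \in draws T & P (S :|: t)) ->
  draw_bounded (fun S => (P S)%:R).
Proof.
move=> P_mono P_draw S T mT; have [PS|PS] := boolP (P S).
  rewrite (eq_bigr (fun _ => 1)) => [|t _]; last first.
    by rewrite (P_mono _ _ (subsetUl S t) PS).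
  by rewrite sumr_const mulr1 lerD2r ler_nat leq_b1.
rewrite mulr0 addr0 add0r.
have [PST|_] := boolP (P (S :|: T)); last by rewrite sumr_ge0.
have [t tT Pt] := P_draw S T mT PST.
by rewrite (bigD1 t) //= Pt lerDl sumr_ge0.
Qed.

Lemma draw_bounded_sum (J : finType) (w : J -> R) (F : J -> {set X} -> R) :
  (forall j, 0 <= w j) -> (forall j, draw_bounded (F j)) ->
  draw_bounded (fun S => \sum_j w j * F j S).
Proof.
move=> w_ge0 F_draw S T mT.
rewrite mulr_sumr exchange_big -!big_split /=; apply: ler_sum => j _.
rewrite mulrCA -mulr_sumr -!mulrDr; apply: ler_wpM2l => //.
exact: F_draw.
Qed.

End DrawBound.

Lemma monotone_sum (R : realFieldType) (X J : finType) (w : J -> R)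
    (F : J -> {set X} -> R) :
  (forall j, 0 <= w j) ->
  (forall j (S T : {set X}), S \subset T -> F j S <= F j T) ->
  forall S T : {set X}, S \subset T -> \sum_j w j * F j S <= \sum_j w j * F j T.
Proof.
move=> w_ge0 F_mono S T sST; apply: ler_sum => j _.
by apply: ler_wpM2l => //; apply: F_mono.
Qed.

Section GreedyDraw.
Variables (R : realFieldType) (X : finType) (m : nat) (f : {set X} -> R).
Hypothesis f_mono : forall S T : {set X}, S \subset T -> f S <= f T.
Hypothesis f_draw : draw_bounded m f.

Lemma greedy_draw_gain (k : nat) (S tau T : {set X}) :
  #|T| = k ->
  (forall t : {set X}, #|t| = m -> f (S :|: t) <= f (S :|: tau)) ->
  (f T - f S) / ('C(k, m))%:R <= f (S :|: tau) - f S.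
Proof.
(* For m > k the binomial vanishes and [x / 0 = 0]: only monotonicity is left. *)
move=> cT tau_max; have [km|mk] := leqP m k; last first.
  by rewrite bin_small // invr0 mulr0 subr_ge0 f_mono // subsetUl.
have C_gt0 : (0 : R) < ('C(k, m))%:R by rewrite ltr0n bin_gt0.
have mT : (m <= #|T|)%N by rewrite cT.
have bound := f_draw S mT.
rewrite cards_draws cT in bound.
have sum_le : \sum_(t in draws m T) f (S :|: t) <= ('C(k, m))%:R * f (S :|: tau).
  rewrite -cT -cards_draws mulr_natl -sumr_const; apply: ler_sum => t.
  by rewrite inE => /andP[_ /eqP]; apply: tau_max.
have fT_le : f T <= f (S :|: T) by rewrite f_mono // subsetUr.
rewrite ler_pdivrMr // mulrBl; lra.
Qed.

End GreedyDraw.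

Lemma reach_mono (V : finType) (X : outcome V) (A B : {set V}) :
  A \subset B -> reach X A \subset reach X B.
Proof.
move=> sAB; apply/subsetP=> v; rewrite !inE => /existsP[a /andP[aA a_v]].
by apply/existsP; exists a; rewrite (subsetP sAB).
Qed.

Lemma reachU_seed (V : finType) (X : outcome V) (A B : {set V}) v :
  v \in reach X (A :|: B) -> v \notin reach X A ->
  exists2 u, u \in B & v \in reach X [set u].
Proof.
move=> vAB vA; move: vAB; rewrite inE => /existsP[a /andP[]].
rewrite inE => /orP[aA|aB] a_v.
  by case/negP: vA; rewrite inE; apply/existsP; exists a; rewrite aA.
by exists a => //; rewrite inE; apply/existsP; exists a; rewrite inE eqxx.
Qed.

Lemma forall_ord_neq (k n : nat) : [forall j : 'I_k, n != j] = (k <= n)%N.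
Proof.
apply/forallP/idP => [n_neq|k_le_n j].
  by rewrite leqNgt; apply/negP=> n_lt_k; have /eqP := n_neq (Ordinal n_lt_k).
by rewrite neq_ltn (leq_trans (ltn_ord j) k_le_n) orbT.
Qed.

Section Campaigns.
Variables (V : finType) (mu nu l : nat) (Xs : profile V mu).
Variable I : {ffun 'I_mu -> {set V}}.

Definition campaigns (A : {ffun 'I_mu -> {set V}}) (v : V) :=
  [set i : 'I_mu | v \in reach (Xs i) (A i)].

Lemma mem_campaigns (A : {ffun 'I_mu -> {set V}}) v i :
  (i \in campaigns A v) = (v \in reach (Xs i) (A i)).
Proof. by rewrite in_set. Qed.

Lemma campaigns_mono (A B : {ffun 'I_mu -> {set V}}) v :
  (forall i, A i \subset B i) -> campaigns A v \subset campaigns B v.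
Proof.
move=> sAB; apply/subsetP=> i.
by have := subsetP (reach_mono (Xs i) (sAB i)) v; rewrite !inE.
Qed.

Lemma augment_mono (S T : {set V * 'I_mu}) i :
  S \subset T -> augment I S i \subset augment I T i.
Proof.
move=> sST; rewrite !ffunE setUS //; apply/subsetP=> v; rewrite !inE.
exact: (subsetP sST).
Qed.

Lemma campaigns_augment_mono (S T : {set V * 'I_mu}) v :
  S \subset T -> campaigns (augment I S) v \subset campaigns (augment I T) v.
Proof. by move=> sST; apply: campaigns_mono => i; apply: augment_mono. Qed.

Lemma campaigns_seeds_augment (S : {set V * 'I_mu}) v :
  campaigns I v \subset campaigns (augment I S) v.
Proof. by apply: campaigns_mono => i; rewrite ffunE subsetUl. Qed.

Lemma augmentU (S T : {set V * 'I_mu}) i :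
  augment I (S :|: T) i = augment I S i :|: slice T i.
Proof.
apply/setP=> v; rewrite !ffunE !in_set.
by rewrite -orbA; congr (_ || _); rewrite in_setU.
Qed.

Lemma campaigns_seed_set (S T : {set V * 'I_mu}) (D : {set 'I_mu}) v :
  D \subset campaigns (augment I (S :|: T)) v :\: campaigns (augment I S) v ->
  exists W : {set V * 'I_mu},
    [/\ W \subset T, (#|W| <= #|D|)%N & D \subset campaigns (augment I W) v].
Proof.
move=> sD.
have seed i : exists u, i \in D -> (u, i) \in T /\ v \in reach (Xs i) [set u].
  have [iD|] := boolP (i \in D); last by exists v.
  have := subsetP sD i iD; rewrite in_setD !mem_campaigns augmentU.
  case/andP=> vS vST; have [u uT vu] := reachU_seed vST vS.
  by exists u; rewrite in_set in uT.
have [g g_seed] := fin_all_exists seed.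
exists [set (g i, i) | i in D]; rewrite leq_imset_card; split=> //.
  by apply/subsetP=> _ /imsetP[i iD ->]; case: (g_seed i iD).
apply/subsetP=> i iD; rewrite mem_campaigns.
apply: (subsetP (reach_mono _ _)) (g_seed i iD).2.
by rewrite sub1set ffunE in_setU in_set imset_f ?orbT.
Qed.

Definition counted (S : {set V * 'I_mu}) (v : V) :=
  [forall j : 'I_l, nreached Xs I v != j] &&
  ((nreached Xs (augment I S) v == 0%N) || (nu <= nreached Xs (augment I S) v)%N).

Hypothesis l_gt0 : (0 < l)%N.

Lemma countedE S v : counted S v =
  (l <= #|campaigns I v|)%N && (nu <= #|campaigns (augment I S) v|)%N.
Proof.
rewrite /counted /nreached -/(campaigns I v) -/(campaigns (augment I S) v).
rewrite forall_ord_neq; case: leqP => //= l_le_I.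
have I_le_aug := subset_leq_card (campaigns_seeds_augment S v).
by rewrite eqn0Ngt (leq_trans l_gt0 (leq_trans l_le_I I_le_aug)).
Qed.

Lemma counted_mono (S T : {set V * 'I_mu}) v :
  S \subset T -> counted S v -> counted T v.
Proof.
rewrite !countedE => sST /andP[-> nu_le] /=.
exact: leq_trans nu_le (subset_leq_card (campaigns_augment_mono v sST)).
Qed.

Lemma counted_draw (S T : {set V * 'I_mu}) v :
  (nu - l <= #|T|)%N -> counted (S :|: T) v ->
  exists2 t, t \in draws (nu - l) T & counted (S :|: t) v.
Proof.
move=> T_big; rewrite countedE.
set A := campaigns (augment I S) v; set B := campaigns (augment I (S :|: T)) v.
case/andP=> l_le_I nu_le_B.
have [D sD cD] := subset_card_exists (geq_minl #|B :\: A| (nu - l)%N).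
have [W [sWT cWD sDW]] := campaigns_seed_set sD.
have W_le : (#|W| <= nu - l <= #|T|)%N.
  by rewrite T_big andbT (leq_trans cWD) // cD geq_minr.
have [t [sWt stT ct]] := subset_card_extend sWT W_le.
exists t; first by rewrite inE stT ct eqxx.
rewrite countedE l_le_I /=.
have dAD : [disjoint A & D].
  apply: disjointWr sD _; rewrite disjoints_subset.
  by apply/subsetP => i iA; rewrite in_setC in_setD iA.
have sADt : A :|: D \subset campaigns (augment I (S :|: t)) v.
  rewrite subUset campaigns_augment_mono ?subsetUl //=.
  apply: subset_trans sDW (campaigns_augment_mono v _).
  exact: subset_trans sWt (subsetUr S t).
apply: leq_trans (subset_leq_card sADt).
rewrite cardsU (disjoint_setI0 dAD) cards0 subn0 cD addn_minr leq_min.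
have l_le_A := leq_trans l_le_I (subset_leq_card (campaigns_seeds_augment S v)).
apply/andP; split.
  apply: leq_trans nu_le_B _; rewrite -(cardsID A B) leq_add2r.
  exact/subset_leq_card/subsetIr.
by apply: leq_trans (leq_add l_le_A (leqnn _)); rewrite -leq_subLR.
Qed.

End Campaigns.

Lemma outcome_prob_ge0 (R : realFieldType) (V : finType) (E : rel V)
    (p : V -> V -> R) (X : outcome V) :
  (forall u v, 0 <= p u v <= 1) -> 0 <= outcome_prob E p X.
Proof.
move=> p01; apply: prodr_ge0 => v _; apply: prodr_ge0 => u _.
have /andP[p_ge0 p_le1] := p01 u v.
by case: (E u v); case: (u \in X v); rewrite ?subr_ge0.
Qed.

Lemma profile_prob_ge0 (R : realFieldType) (V : finType) (mu : nat) corr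
    (E : rel V) (p : 'I_mu -> V -> V -> R) (Xs : profile V mu) :
  (forall i u v, 0 <= p i u v <= 1) -> 0 <= profile_prob corr E p Xs.
Proof.
move=> p01; rewrite /profile_prob; case: corr.
  by case: pickP => [i0 _|//]; case: ifP => // _; apply: outcome_prob_ge0.
by apply: prodr_ge0 => i _; apply: outcome_prob_ge0.
Qed.

Lemma Phi_sum_counted (R : realFieldType) (V : finType) (mu nu : nat) corr
    (E : rel V) (p : 'I_mu -> V -> V -> R) (I : {ffun 'I_mu -> {set V}}) l S :
  Phi nu corr E p I l S =
  \sum_(x : profile V mu * V) profile_prob corr E p x.1 * (counted nu l x.1 I S x.2)%:R.
Proof.
rewrite -(pair_bigA _ (fun Xs v => profile_prob corr E p Xs * (counted nu l Xs I S v)%:R)).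
apply: eq_bigr => Xs _; rewrite -mulr_sumr -sum1_card natr_sum big_mkcond /=.
by congr (_ * _); apply: eq_bigr => v _; rewrite in_set /counted; case: ifP.
Qed.

Theorem mainTheorem5 (R : realFieldType) (V : finType) (mu nu : nat)
  (corr : bool) (E : rel V) (p : 'I_mu -> V -> V -> R)
  (I : {ffun 'I_mu -> {set V}}) (k l : nat)
  (S tau Sopt : {set V * 'I_mu}) :
  (2 <= nu)%N -> (nu <= mu)%N -> (2 <= k)%N ->
  (forall i u v, 0 <= p i u v <= 1) ->
  (corr -> forall i j, p i = p j) ->
  (1 <= l)%N -> (l <= nu - 1)%N ->
  (#|S| <= k - (nu - l))%N ->
  #|tau| = (nu - l)%N ->
  (forall t : {set V * 'I_mu}, #|t| = (nu - l)%N ->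
     Phi nu corr E p I l (S :|: t) <= Phi nu corr E p I l (S :|: tau)) ->
  #|Sopt| = k ->
  (forall T : {set V * 'I_mu}, #|T| = k ->
     Phi nu corr E p I l T <= Phi nu corr E p I l Sopt) ->
  Phi nu corr E p I l (S :|: tau) - Phi nu corr E p I l S >=
    (Phi nu corr E p I l Sopt - Phi nu corr E p I l S) / ('C(k, nu - l))%:R.
Proof.
move=> _ _ _ p01 _ l_gt0 _ _ _ tau_max cSopt _.
pose w (x : profile V mu * V) := profile_prob corr E p x.1.
pose P (x : profile V mu * V) S := counted nu l x.1 I S x.2.
pose f S := \sum_x w x * (P x S)%:R.
have PhiE : Phi nu corr E p I l =1 f by move=> T; rewrite Phi_sum_counted.
have w_ge0 x : 0 <= w x by apply: profile_prob_ge0.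
have f_mono : forall T T' : {set V * 'I_mu}, T \subset T' -> f T <= f T'.
  apply: (monotone_sum (F := fun x T => (P x T)%:R)) => // x T T' sTT'.
  rewrite ler_nat /P.
  by case: (boolP (counted _ _ _ _ T _)) => // /(counted_mono l_gt0 sTT') ->.
have f_draw : draw_bounded (nu - l) f.
  apply: (draw_bounded_sum (F := fun x T => (P x T)%:R)) => // x.
  apply: indicator_draw_bounded => [T T'|S' T]; first exact: counted_mono.
  exact: counted_draw.
rewrite !PhiE; apply: (greedy_draw_gain f_mono f_draw cSopt) => t ct.
by rewrite -!PhiE; apply: tau_max.
Qed.
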